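(* Let $M$ be an ordinal monoid with merge. For every $a\in M$ there exists an FO-approximant of $\pi$ from $a^{+}$ to $\mathrm{Cl}^{+}_{\sharp}(\{a\})$, where $a^{+}\subseteq M^{\mathrm{ord}}$ is the set of finite nonempty words all of whose letters are $a$.
   Context: Countable ordinal words over $\Sigma$: maps $w\colon\alpha\to\Sigma$, $\alpha$ a countable ordinal; $\Sigma^{\mathrm{ord}}$ their set. An ordinal monoid: set $M$ with $\pi\colon M^{\mathrm{ord}}\to M$, $\pi(x)=x$ on one-letter words, generalised associativity; $1=\pi(\varepsilon)$, $x\cdot y=\pi(xy)$, $x^\omega=\pi(xxx\cdots)$; ordered by $\le$ if $u\le v$ letterwise implies $\pi(u)\le\pi(v)$. $x^!$ idempotent power, $x^{!+k}$ eventual value of $x^{n!+k}$ in a finite semigroup. Ordinal monoid with merge: $(M,1,\le,\cdot,-^\omega,-^\sharp)$, $M$ finite, $(M,1,\le,\cdot,-^\omega)$ the presentation of an ordered finite ordinal monoid, $-^\sharp$ monotone with $a^{!+k}\le a^\sharp$, $(a^!)^\sharp=a^!$, $a^\sharp a^\sharp=(a^\sharp)^\sharp=a^\sharp$, $(ab)^\sharp=a(ba)^\sharp b$. $\mathrm{Cl}^{+}_{\sharp}(A)$ is the closure of $A$ under $\cdot$ and $-^\sharp$. FO logic over alphabet $M$ (atoms $x<y$, $a(x)$); FO-definable languages and maps (preimages FO-definable). For FO-definable $L\subseteq M^{\mathrm{ord}}$, an FO-approximant of $\pi$ over $L$ is an FO-definable $\rho\colon L\to M$ with $\pi(u)\le\rho(u)$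 for all $u\in L$; it is ''from $L$ to $Y$'' if its values lie in $Y\subseteq M$. *)

From mathcomp Require Import all_boot.
From Stdlib Require Import Cantor.
Set Implicit Arguments.
Unset Strict Implicit.
Unset Printing Implicit Defensive.

(* A countable ordinal word over A is presented by a set of positions  *)
(* dom \subseteq nat, a strict well-ordering lt of dom, and labels.    *)
(* (Every countable ordinal is the order type of such a well-order.)   *)
(* Words are considered up to isomorphism (see [oword_iso]).           *)
Record oword (A : Type) := OWord {
  odom : nat -> Prop;
  olt  : nat -> nat -> Prop;
  olab : nat -> A }.

Definition wf_oword (A : Type) (u : oword A) : Prop :=
  (forall p, odom u p -> ~ olt u p p) /\
  (forall p q r, odom u p -> odom u q -> odom u r ->
      olt u p q -> olt u q r -> olt u p r) /\
  (forall p q, odom u p -> odom u q -> p = q \/ olt u p q \/ olt u q p) /\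
  well_founded (fun p q => odom u p /\ odom u q /\ olt u p q).

Definition oword_iso (A : Type) (u v : oword A) : Prop :=
  exists f : nat -> nat,
    (forall p, odom u p -> odom v (f p)) /\
    (forall q, odom v q -> exists p, odom u p /\ f p = q) /\
    (forall p q, odom u p -> odom u q -> (olt u p q <-> olt v (f p) (f q))) /\
    (forall p, odom u p -> olab v (f p) = olab u p).

Definition empty_word (A : Type) (x0 : A) : oword A :=
  OWord (fun _ => False) (fun _ _ => False) (fun _ => x0).

Definition single_word (A : Type) (x : A) : oword A :=
  OWord (fun n => n = 0) (fun _ _ => False) (fun _ => x).

Definition word2 (A : Type) (x y : A) : oword A :=
  OWord (fun n => n = 0 \/ n = 1) (fun n m => n = 0 /\ m = 1)
        (fun n => if n is 0 then x else y).

Definition map_oword (A B : Type) (f : A -> B) (u : oword A) : oword B :=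
  OWord (odom u) (olt u) (fun n => f (olab u n)).

(* concatenation of an ordinal-indexed sequence of ordinal words
   (positions are pairs coded by the Cantor pairing, ordered lexicographically) *)
Definition flatten_oword (A : Type) (W : oword (oword A)) : oword A :=
  OWord (fun n => let (i, j) := of_nat n in odom W i /\ odom (olab W i) j)
        (fun n m => let (i, j) := of_nat n in let (i', j') := of_nat m in
                    olt W i i' \/ (i = i' /\ olt (olab W i) j j'))
        (fun n => let (i, j) := of_nat n in olab (olab W i) j).

Definition is_ordinal_monoid (M : Type) (pi : oword M -> M) : Prop :=
  (* pi is a map on ordinal words, i.e. invariant under isomorphism *)
  (forall u v, wf_oword u -> wf_oword v -> oword_iso u v -> pi u = pi v) /\
  (forall x, pi (single_word x) = x) /\
  (forall W : oword (oword M), wf_oword W ->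
     (forall i, odom W i -> wf_oword (olab W i)) ->
     pi (flatten_oword W) = pi (map_oword pi W)).

Definition is_partial_order (M : Type) (le : M -> M -> Prop) : Prop :=
  (forall x, le x x) /\
  (forall x y, le x y -> le y x -> x = y) /\
  (forall x y z, le x y -> le y z -> le x z).

Definition letterwise_le (M : Type) (le : M -> M -> Prop) (u v : oword M) : Prop :=
  (forall n, odom u n <-> odom v n) /\
  (forall n m, odom u n -> odom u m -> (olt u n m <-> olt v n m)) /\
  (forall n, odom u n -> le (olab u n) (olab v n)).

Definition is_ordered_ordinal_monoid (M : Type) (pi : oword M -> M)
    (le : M -> M -> Prop) : Prop :=
  is_ordinal_monoid pi /\ is_partial_order le /\
  (forall u v, wf_oword u -> wf_oword v -> letterwise_le le u v -> le (pi u) (pi v)).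

Definition om_one (M : Type) (pi : oword M -> M) (x0 : M) : M := pi (empty_word x0).
Definition om_mul (M : Type) (pi : oword M -> M) (x y : M) : M := pi (word2 x y).

Definition om_pow (M : Type) (pi : oword M -> M) (a : M) (n : nat) : M :=
  iter n (om_mul pi a) (om_one pi a).

Definition is_idem_power (M : Type) (pi : oword M -> M) (a v : M) : Prop :=
  (exists n, 0 < n /\ om_pow pi a n = v) /\ om_mul pi v v = v.

Definition is_idem_power_plus (M : Type) (pi : oword M -> M) (a : M) (k : nat)
    (v : M) : Prop :=
  exists N, forall n, N <= n -> om_pow pi a (n`! + k) = v.

Definition is_ordinal_monoid_with_merge (M : finType) (pi : oword M -> M)
    (le : M -> M -> Prop) (sharp : M -> M) : Prop :=
  is_ordered_ordinal_monoid pi le /\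
  (forall a b, le a b -> le (sharp a) (sharp b)) /\
  (forall a k v, is_idem_power_plus pi a k v -> le v (sharp a)) /\
  (forall a e, is_idem_power pi a e -> sharp e = e) /\
  (forall a, om_mul pi (sharp a) (sharp a) = sharp a) /\
  (forall a, sharp (sharp a) = sharp a) /\
  (forall a b, sharp (om_mul pi a b) =
               om_mul pi a (om_mul pi (sharp (om_mul pi b a)) b)).

Inductive cl_sharp (M : Type) (pi : oword M -> M) (sharp : M -> M)
    (A : M -> Prop) : M -> Prop :=
  | cl_base x : A x -> cl_sharp pi sharp A x
  | cl_mul x y : cl_sharp pi sharp A x -> cl_sharp pi sharp A y ->
                 cl_sharp pi sharp A (om_mul pi x y)
  | cl_sharp_op x : cl_sharp pi sharp A x -> cl_sharp pi sharp A (sharp x).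

Inductive fo_formula (M : Type) :=
  | FLt  : nat -> nat -> fo_formula M
  | FLab : M -> nat -> fo_formula M
  | FNot : fo_formula M -> fo_formula M
  | FAnd : fo_formula M -> fo_formula M -> fo_formula M
  | FEx  : nat -> fo_formula M -> fo_formula M.

Fixpoint fo_sat (M : Type) (u : oword M) (e : nat -> nat) (phi : fo_formula M)
    : Prop :=
  match phi with
  | FLt x y => olt u (e x) (e y)
  | FLab a x => olab u (e x) = a
  | FNot psi => ~ fo_sat u e psi
  | FAnd psi chi => fo_sat u e psi /\ fo_sat u e chi
  | FEx x psi => exists p, odom u p /\
                   fo_sat u (fun y => if y == x then p else e y) psi
  end.

Fixpoint fo_closed_in (M : Type) (bound : seq nat) (phi : fo_formula M) : Prop :=
  match phi with
  | FLt x y => x \in bound /\ y \in bound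
  | FLab _ x => x \in bound
  | FNot psi => fo_closed_in bound psi
  | FAnd psi chi => fo_closed_in bound psi /\ fo_closed_in bound chi
  | FEx x psi => fo_closed_in (x :: bound) psi
  end.

Definition fo_sentence (M : Type) (phi : fo_formula M) : Prop := fo_closed_in [::] phi.

Definition fo_definable (M : Type) (L : oword M -> Prop) : Prop :=
  exists phi : fo_formula M, fo_sentence phi /\
    forall u, wf_oword u -> (L u <-> fo_sat u (fun _ => 0) phi).

Definition fo_definable_map (M : Type) (L : oword M -> Prop) (rho : oword M -> M)
    : Prop :=
  forall m, fo_definable (fun u => L u /\ rho u = m).

Definition fo_approximant (M : Type) (pi : oword M -> M) (le : M -> M -> Prop)
    (L : oword M -> Prop) (Y : M -> Prop) (rho : oword M -> M) : Prop :=
  fo_definable_map L rho /\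
  (forall u, L u -> le (pi u) (rho u)) /\
  (forall u, L u -> Y (rho u)).

Definition a_plus (M : Type) (a : M) (u : oword M) : Prop :=
  wf_oword u /\
  (exists N, forall n, odom u n -> n < N) /\
  (exists n, odom u n) /\
  (forall n, odom u n -> olab u n = a).

(* A word u in a^+ with k letters has pi u = a^k, by peeling off its first letter.
   As M is finite, the powers of a are eventually periodic, so there is a threshold I
   with a^(n! + k) = a^k for all large n whenever k >= I; the merge axiom then gives
   a^k <= a^# for k >= I.  The approximant sends words with at least I letters to a^#
   and the other words u to pi u = a^|u|.  Each of its fibres is a^+ intersected with a
   finite Boolean combination of "u has at least k positions", which is first-order
   (there are x_1 < ... < x_k); a^+ itself is first-order because a well-order is finite
   iff it has a last element and every non-first element has an immediate predecessor. *)

From Stdlib Require Import Cantor Classical ClassicalEpsilon Wellfounded.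
From mathcomp Require Import all_boot.

Set Implicit Arguments.
Unset Strict Implicit.
Unset Printing Implicit Defensive.

Definition least_pos (A : Type) (u : oword A) (p : nat) : Prop :=
  odom u p /\ forall q, odom u q -> q <> p -> olt u p q.

Definition remove_pos (A : Type) (u : oword A) (p : nat) : oword A :=
  OWord (fun q => odom u q /\ q <> p) (olt u) (olab u).

Section WellFormedWords.
Variable A : Type.

Lemma wf_oword_iso (u v : oword A) : oword_iso u v -> wf_oword u -> wf_oword v.
Proof.
move=> [f [fdom [fonto [flt _]]]] [irr [trn [tot wfd]]].
split; [|split; [|split]].
- move=> _ /fonto [p [dp <-]] /(flt _ _ dp dp); exact: irr.
- move=> _ _ _ /fonto [p [dp <-]] /fonto [q [dq <-]] /fonto [r [dr <-]].
  move=> /(flt _ _ dp dq) pq /(flt _ _ dq dr) qr; apply/(flt _ _ dp dr).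
  exact: trn pq qr.
- move=> _ _ /fonto [p [dp <-]] /fonto [q [dq <-]].
  case: (tot _ _ dp dq) => [->|[pq|qp]]; first by left.
  + by right; left; apply/flt.
  + by right; right; apply/flt.
- have acc_img p : odom u p -> Acc (fun x y => odom v x /\ odom v y /\ olt v x y) (f p).
    elim/(well_founded_ind wfd): p => p IH dp; constructor => _ [/fonto [q [dq <-]] [_]].
    by move=> /(flt _ _ dq dp) qp; apply: IH.
  move=> y; constructor => _ [/fonto [p [dp <-]] _]; exact: acc_img.
Qed.

Lemma wf_oword_restrict (u : oword A) (D : nat -> Prop) :
  (forall p, D p -> odom u p) -> wf_oword u -> wf_oword (OWord D (olt u) (olab u)).
Proof.
move=> sub [irr [trn [tot wfd]]]; split; [|split; [|split]] => /=.
- by move=> p /sub; apply: irr.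
- by move=> p q r /sub dp /sub dq /sub dr; apply: trn.
- by move=> p q /sub dp /sub dq; apply: tot.
- apply: (Inclusion.wf_incl _ _ _ _ wfd) => p q [/sub dp [/sub dq pq]].
  exact: (conj dp (conj dq pq)).
Qed.

Lemma wf_empty_word (x : A) : wf_oword (empty_word x).
Proof.
split; [|split; [|split]] => /=.
- by move=> p [].
- by move=> p q r [].
- by move=> p q [].
- by move=> p; constructor => q [[]].
Qed.

Lemma wf_single_word (x : A) : wf_oword (single_word x).
Proof.
split; [|split; [|split]] => /=.
- by move=> p _ [].
- by move=> p q r _ _ _ [].
- by move=> p q -> ->; left.
- by move=> p; constructor => q [_ [_ []]].
Qed.

Lemma wf_word2 (x y : A) : wf_oword (word2 x y).
Proof.
split; [|split; [|split]] => /=.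
- by move=> p _ [-> ].
- by move=> p q r _ _ _ [_ ->] [].
- by move=> p q [->|->] [->|->]; [left|right; left|right; right|left].
- move=> p; constructor => q [_ [_ [-> _]]].
  by constructor => r [_ [_ [_ ]]].
Qed.

Lemma wf_remove_pos (u : oword A) p : wf_oword u -> wf_oword (remove_pos u p).
Proof. by apply: wf_oword_restrict => q []. Qed.

Lemma exists_least_pos (u : oword A) q : wf_oword u -> odom u q -> exists p, least_pos u p.
Proof.
move=> [_ [_ [tot wfd]]] dq.
have [p [dp pmin]] : exists p, odom u p /\ forall r, odom u r -> ~ olt u r p.
  elim/(well_founded_ind wfd): q dq => q IH dq.
  case: (classic (exists r, odom u r /\ olt u r q)) => [[r [dr rq]]|nr].
  - exact: IH r (conj dr (conj dq rq)) dr.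
  - by exists q; split=> // r dr rq; apply: nr; exists r.
exists p; split=> // r dr rp.
by case: (tot _ _ dp dr) => [pr|[//|/(pmin _ dr)//]]; case: rp.
Qed.

End WellFormedWords.

(* The logic has no equality, so sizes are measured by strictly increasing chains. *)
Fixpoint chain_from (A : Type) (u : oword A) (p k : nat) : Prop :=
  if k is k'.+1 then exists q, odom u q /\ olt u p q /\ chain_from u q k' else True.

Definition has_chain (A : Type) (u : oword A) (k : nat) : Prop :=
  if k is k'.+1 then exists p, odom u p /\ chain_from u p k' else True.

Definition has_size (A : Type) (u : oword A) (k : nat) : Prop :=
  has_chain u k /\ ~ has_chain u k.+1.

Definition has_last (A : Type) (u : oword A) : Prop :=
  exists p, odom u p /\ forall q, odom u q -> ~ olt u p q.

Definition has_preds (A : Type) (u : oword A) : Prop :=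
  forall p, odom u p -> (exists q, odom u q /\ olt u q p) ->
  exists q, odom u q /\ olt u q p /\ forall r, odom u r -> ~ (olt u q r /\ olt u r p).

Definition finite_dom (A : Type) (u : oword A) : Prop :=
  exists N, forall n, odom u n -> n < N.

Section Chains.
Variables (A : Type) (u : oword A).

Lemma chain_fromW p k : chain_from u p k.+1 -> chain_from u p k.
Proof.
elim: k p => [|k IH] p //= [q [dq [pq c]]].
by exists q; split=> //; split=> //; apply: IH.
Qed.

Lemma has_chainS k : has_chain u k.+1 -> has_chain u k.
Proof.
case: k => [|k] /=; first by [].
by move=> [p [dp c]]; exists p; split=> //; apply: chain_fromW.
Qed.

Lemma has_chainW m n : m <= n -> has_chain u n -> has_chain u m.
Proof. by move=> /subnK <-; elim: (n - m) => [|d IH] //; rewrite addSn => /has_chainS. Qed.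

Lemma has_size_chainE k n : has_size u k -> has_chain u n <-> n <= k.
Proof.
move=> [ck nck]; split=> [cn|le_n_k]; last exact: has_chainW le_n_k ck.
by rewrite leqNgt; apply/negP => lt_k_n; apply: nck (has_chainW lt_k_n cn).
Qed.

Lemma has_size_exists n : ~ has_chain u n -> exists k, has_size u k.
Proof.
elim: n => [|n IH] nc; first by case: nc.
by case: (classic (has_chain u n)) => c; [exists n|apply: IH].
Qed.

Hypothesis wu : wf_oword u.

Lemma chain_from_seq p k : odom u p -> chain_from u p k ->
  exists s : seq nat, size s = k /\ uniq s /\
    forall q, q \in s -> odom u q /\ olt u p q.
Proof.
have [irr [trn _]] := wu.
elim: k p => [|k IH] p dp /=; first by exists [::].
move=> [q [dq [pq c]]]; have [s [sz [us hs]]] := IH q dq c.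
exists (q :: s); split; first by rewrite /= sz.
split.
- by rewrite /= us andbT; apply/negP => /hs [_]; apply: irr.
- move=> r; rewrite inE => /orP [/eqP -> //|/hs [dr qr]].
  by split=> //; apply: trn pq qr.
Qed.

Lemma bounded_no_chain N : (forall n, odom u n -> n < N) -> ~ has_chain u N.+1.
Proof.
move=> bnd [p [dp c]]; have [s [sz [us hs]]] := chain_from_seq dp c.
have [irr _] := wu.
have uniq_ps : uniq (p :: s) by rewrite /= us andbT; apply/negP => /hs [_]; apply: irr.
have sub_ps : {subset p :: s <= iota 0 N}.
  by move=> q; rewrite inE mem_iota add0n => /orP [/eqP ->|/hs [dq _]]; apply: bnd.
by have := uniq_leq_size uniq_ps sub_ps; rewrite /= sz size_iota ltnn.
Qed.

Lemma bounded_has_max N (S : nat -> Prop) x :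
  (forall n, odom u n -> n < N) -> (forall y, S y -> odom u y) -> S x ->
  exists m, S m /\ forall y, S y -> ~ olt u m y.
Proof.
move=> bnd sub Sx; apply: NNPP => nomax.
have up y : S y -> exists z, S z /\ olt u y z.
  move=> Sy; apply: NNPP => noz; apply: nomax; exists y; split=> // z Sz yz.
  by apply: noz; exists z.
have chain k y : S y -> chain_from u y k.
  elim: k y => [|k IH] y Sy //=; have [z [Sz yz]] := up y Sy.
  by exists z; split; [apply: sub|split=> //; apply: IH].
by apply: (bounded_no_chain bnd); exists x; split; [apply: sub|apply: chain].
Qed.

Lemma bounded_has_last N : (forall n, odom u n -> n < N) -> (exists n, odom u n) ->
  has_last u.
Proof. by move=> bnd [n dn]; apply: (bounded_has_max bnd (S := odom u) _ dn). Qed.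

Lemma bounded_has_preds N : (forall n, odom u n -> n < N) -> has_preds u.
Proof.
move=> bnd p dp [q [dq qp]].
have [m [[dm mp] mmax]] :=
  bounded_has_max bnd (S := fun y => odom u y /\ olt u y p) (fun y => @proj1 _ _) (conj dq qp).
by exists m; split=> //; split=> // r dr [mr rp]; apply: (mmax r (conj dr rp)).
Qed.

Lemma has_last_preds_bounded : has_last u -> has_preds u -> finite_dom u.
Proof.
have [irr [trn [tot wfd]]] := wu.
move=> [l [dl lmax]] preds.
suff below x : odom u x -> exists N, forall q, odom u q -> ~ olt u x q -> q < N.
  have [N hN] := below l dl; exists N => n dn; exact: hN n dn (lmax n dn).
elim/(well_founded_ind wfd): x => x IH dx.
case: (classic (exists q, odom u q /\ olt u q x)) => [hq|nq].
- have [y [dy [yx ymax]]] := preds x dx hq.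
  have [Ny hNy] := IH y (conj dy (conj dx yx)) dy.
  exists (maxn Ny x.+1) => q dq xq; rewrite leq_max.
  case: (tot q x dq dx) => [->|[qx|]]; last by [].
  + by rewrite ltnSn orbT.
  + apply/orP; left; apply: hNy => // yq; exact: ymax q dq (conj yq qx).
- exists x.+1 => q dq xq; case: (tot q x dq dx) => [->|[qx|]] //.
  by case: nq; exists q.
Qed.

Lemma finite_domE : (exists n, odom u n) ->
  finite_dom u <-> has_last u /\ has_preds u.
Proof.
move=> ne; split; last by move=> [hl hp]; apply: has_last_preds_bounded.
by move=> [N bnd]; split; [exact: bounded_has_last bnd ne|exact: bounded_has_preds bnd].
Qed.

Lemma chain_from_remove p q k : odom u q ->
  (forall r, odom u r -> olt u q r -> r <> p) ->
  chain_from u q k -> chain_from (remove_pos u p) q k.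
Proof.
have [_ [trn _]] := wu.
elim: k q => [|k IH] q dq above //= [r [dr [qr c]]].
exists r; split; first by split=> //; apply: above.
split=> //; apply: IH => // s ds rs; apply: above => //; exact: trn qr rs.
Qed.

Lemma chain_from_of_remove p q k : chain_from (remove_pos u p) q k -> chain_from u q k.
Proof.
elim: k q => [|k IH] q //= [r [[dr _] [qr c]]].
by exists r; split=> //; split=> //; apply: IH.
Qed.

Lemma has_chain_remove_least p k : least_pos u p ->
  has_chain u k.+1 <-> has_chain (remove_pos u p) k.
Proof.
have [irr [trn _]] := wu.
move=> [dp pmin]; split.
- move=> [q [dq c]]; case: k c => [|k] //= [r [dr [qr c]]].
  have pr : olt u p r.
    case: (classic (q = p)) => [<- //|qp]; exact: trn (pmin q dq qp) qr.
  have rp : r <> p by move=> e; move: pr; rewrite e; apply: irr.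
  exists r; split=> //; apply: chain_from_remove => // s ds rs e.
  by apply: (irr p dp); rewrite -{2}e; apply: trn pr rs.
- case: k => [|k] /=; first by exists p.
  move=> [r [[dr rp] c]]; exists p; split=> //; exists r; split=> //.
  by split; [apply: pmin|apply: chain_from_of_remove c].
Qed.

End Chains.

Lemma oword_iso_split_least (A : Type) (u : oword A) p : wf_oword u -> least_pos u p ->
  oword_iso u (flatten_oword (word2 (single_word (olab u p)) (remove_pos u p))).
Proof.
move=> [irr [trn _]] [dp pmin].
exists (fun q => if q == p then to_nat (0, 0) else to_nat (1, q)).
split; [|split; [|split]] => [q dq|n|q r dq dr|q dq];
  cbn [flatten_oword odom olt olab word2 single_word remove_pos].
- case: eqP => [_|/eqP qp]; rewrite cancel_of_to /=; first by split; [left|].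
  by split; [right|split=> //; apply/eqP].
- case En: (of_nat n) => [i j]; rewrite -[n]cancel_to_of En.
  move=> [[->|->]] /=; first by move=> ->; exists p; rewrite eqxx.
  by move=> [dj /eqP jp]; exists j; rewrite (negbTE jp).
- have nlt_p s : odom u s -> ~ olt u s p.
    move=> ds sp; case: (eqVneq s p) => [e|/eqP sp']; first by move: sp; rewrite e; apply: irr.
    exact: irr (trn _ _ _ ds dp ds sp (pmin s ds sp')).
  case: eqP => [->|/eqP qp]; case: eqP => [->|/eqP rp]; rewrite !cancel_of_to.
  + by split=> [/(irr _ dp)|[[_ //]|[_ []]]].
  + by split=> _; [left|apply: pmin => //; apply/eqP].
  + by split=> [/(nlt_p _ dq)|[[]|[]]].
  + by split=> [qr|[[]|[_ qr]]] //; right.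
- by case: eqP => [->|_]; rewrite cancel_of_to.
Qed.

Section OrdinalMonoid.
Variables (M : Type) (pi : oword M -> M).
Hypothesis pim : is_ordinal_monoid pi.

Lemma pi_empty (u : oword M) x : wf_oword u -> (forall p, ~ odom u p) -> pi u = om_one pi x.
Proof.
have [pi_iso _] := pim; move=> wu nd; apply: pi_iso; [exact: wu|exact: wf_empty_word|].
exists id; split; [|split; [|split]].
- by move=> p /nd.
- by move=> q [].
- by move=> p q /nd.
- by move=> p /nd.
Qed.

Lemma pi_concat (u v : oword M) : wf_oword u -> wf_oword v ->
  pi (flatten_oword (word2 u v)) = om_mul pi (pi u) (pi v).
Proof.
have [pi_iso [_ pi_flatten]] := pim; move=> wu wv.
rewrite pi_flatten; [|exact: wf_word2|by move=> i [->|->]; [exact: wu|exact: wv]].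
apply: pi_iso; [exact: wf_word2|exact: wf_word2|].
by exists id; split; [|split; [|split]] => p //=; [exists p|case=> ->].
Qed.

Lemma pi_remove_least (u : oword M) p : wf_oword u -> least_pos u p ->
  pi u = om_mul pi (olab u p) (pi (remove_pos u p)).
Proof.
have [pi_iso [pi_single _]] := pim; move=> wu least_p.
have split_u := oword_iso_split_least wu least_p.
rewrite (pi_iso _ _ wu (wf_oword_iso split_u wu) split_u).
by rewrite pi_concat ?pi_single; [|exact: wf_single_word|exact: wf_remove_pos].
Qed.

Lemma pi_const_word (a : M) k (u : oword M) : wf_oword u ->
  (forall p, odom u p -> olab u p = a) -> has_size u k -> pi u = om_pow pi a k.
Proof.
elim: k u => [|k IH] u wu lab [ck nck].
  by apply: pi_empty => // p dp; apply: nck; exists p.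
have [q [dq _]] := ck.
have [p least_p] := exists_least_pos wu dq.
rewrite (pi_remove_least wu least_p) (lab p (proj1 least_p)) (IH _ (wf_remove_pos p wu)) //.
- by move=> r [dr _]; apply: lab.
- by rewrite /has_size -!(has_chain_remove_least wu _ least_p).
Qed.

End OrdinalMonoid.

Section FirstOrder.
Context {M : Type}.
Implicit Types (u : oword M) (L K : oword M -> Prop) (f : fo_formula M).

Definition fo_true : fo_formula M :=
  FNot (FAnd (FEx 0 (FLt M 0 0)) (FNot (FEx 0 (FLt M 0 0)))).
Definition fo_all x f : fo_formula M := FNot (FEx x (FNot f)).

Fixpoint fo_chain_from (k x : nat) : fo_formula M :=
  if k is k'.+1 then FEx x.+1 (FAnd (FLt M x x.+1) (fo_chain_from k' x.+1)) else fo_true.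

Definition fo_has_chain (k : nat) : fo_formula M :=
  if k is k'.+1 then FEx 0 (fo_chain_from k' 0) else fo_true.

Lemma fo_sat_true u e : fo_sat u e fo_true.
Proof. by move=> [ff nff]. Qed.

Lemma fo_sat_chain_from u k x e : fo_sat u e (fo_chain_from k x) <-> chain_from u (e x) k.
Proof.
elim: k x e => [|k IH] x e /=; first by split=> // _; apply: fo_sat_true.
rewrite (ltn_eqF (ltnSn x)) eqxx.
by split=> -[p [dp [xp c]]]; exists p; do 2!split=> //; move: c; rewrite IH /= eqxx.
Qed.

Lemma fo_sat_has_chain u k e : fo_sat u e (fo_has_chain k) <-> has_chain u k.
Proof.
case: k => [|k] /=; first by split=> // _; apply: fo_sat_true.
by split=> -[p [dp c]]; exists p; split=> //; move: c; rewrite fo_sat_chain_from.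
Qed.

Lemma fo_closed_true b : fo_closed_in b fo_true.
Proof. by rewrite /= !inE. Qed.

Lemma fo_closed_chain_from b k x : x \in b -> fo_closed_in b (fo_chain_from k x).
Proof.
elim: k x b => [|k IH] x b xb /=; first exact: fo_closed_true.
by rewrite !inE eqxx xb orbT; split=> //; apply: IH; rewrite inE eqxx.
Qed.

Lemma fo_definable_ext L K : (forall u, wf_oword u -> (L u <-> K u)) ->
  fo_definable L -> fo_definable K.
Proof.
move=> LK [phi [cl sat]]; exists phi; split=> // u wu.
by rewrite -(LK u wu); apply: sat.
Qed.

Lemma fo_definable_not L : fo_definable L -> fo_definable (fun u => ~ L u).
Proof. by move=> [phi [cl sat]]; exists (FNot phi); split=> // u wu /=; rewrite sat. Qed.

Lemma fo_definable_and L K : fo_definable L -> fo_definable K ->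
  fo_definable (fun u => L u /\ K u).
Proof.
move=> [phi [cl sat]] [phi' [cl' sat']]; exists (FAnd phi phi'); split=> // u wu /=.
by rewrite sat // sat'.
Qed.

Lemma fo_definable_or L K : fo_definable L -> fo_definable K ->
  fo_definable (fun u => L u \/ K u).
Proof.
move=> dL dK; apply: fo_definable_ext (fo_definable_not
  (fo_definable_and (fo_definable_not dL) (fo_definable_not dK))) => u _.
split=> [nLK|[Lu|Ku] [nL nK]]; [|exact: nL Lu|exact: nK Ku].
by apply: NNPP => nor; apply: nLK; split=> ?; apply: nor; [left|right].
Qed.

Lemma fo_definable_const (P : Prop) : fo_definable (fun _ : oword M => P).
Proof.
have dT : fo_definable (fun _ : oword M => True).
  by exists fo_true; split=> [|u _]; [apply: fo_closed_true|split=> // _; apply: fo_sat_true].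
case: (classic P) => [p|np]; first by apply: fo_definable_ext dT.
by apply: fo_definable_ext (fo_definable_not dT) => u _; split.
Qed.

Lemma fo_definable_exists_lt (L : nat -> oword M -> Prop) n :
  (forall k, fo_definable (L k)) -> fo_definable (fun u => exists2 k, k < n & L k u).
Proof.
move=> dL; elim: n => [|n IH].
  by apply: fo_definable_ext (fo_definable_const False) => u _; split=> [|[]].
apply: fo_definable_ext (fo_definable_or IH (dL n)) => u _.
split=> [[[k kn Lk]|Ln]|[k]]; first (by exists k => //; apply: ltnW); first by exists n.
by rewrite ltnS leq_eqVlt => /orP [/eqP ->|kn Lk]; [right|left; exists k].
Qed.

Lemma fo_definable_sentence L f : fo_sentence f ->
  (forall u, wf_oword u -> (fo_sat u (fun=> 0) f <-> L u)) -> fo_definable L.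
Proof. by move=> cl sat; exists f; split=> // u wu; rewrite sat. Qed.

Lemma fo_definable_has_chain k : fo_definable (fun u => has_chain u k).
Proof.
apply: (@fo_definable_sentence _ (fo_has_chain k)) => [|u _]; last exact: fo_sat_has_chain.
case: k => [|k]; first exact: fo_closed_true.
by apply: fo_closed_chain_from; rewrite inE.
Qed.

Lemma fo_definable_all_letters (a : M) : fo_definable (fun u => forall p, odom u p -> olab u p = a).
Proof.
apply: (@fo_definable_sentence _ (fo_all 0 (FLab a 0))) => [|u _] /=; first by rewrite ?inE.
split=> [all p dp|all [p [dp npa]]]; last by apply: npa; apply: all.
by apply: NNPP => npa; apply: all; exists p.
Qed.

Lemma fo_definable_has_last : fo_definable (@has_last M).
Proof.
apply: (@fo_definable_sentence _ (FEx 0 (fo_all 1 (FNot (FLt M 0 1))))) => [|u _] /=.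
  by rewrite ?inE.
split=> -[p [dp last]]; exists p; split=> //.
- by move=> q dq pq; apply: last; exists q; split=> //; apply.
- by move=> [q [dq npq]]; apply: npq; apply: last.
Qed.

Lemma fo_definable_has_preds : fo_definable (@has_preds M).
Proof.
pose no_between := fo_all 2 (FNot (FAnd (FLt M 1 2) (FLt M 2 0))).
pose imm_pred := FEx 1 (FAnd (FLt M 1 0) no_between).
apply: (@fo_definable_sentence _
  (fo_all 0 (FNot (FAnd (FEx 1 (FLt M 1 0)) (FNot imm_pred))))) => [|u _] /=.
  by rewrite ?inE.
split=> [preds p dp pre|preds [p [dp nn]]].
- apply: NNPP => nimm; apply: preds; exists p; split=> // nn; apply: nn; split=> //.
  move=> [q [dq [qp nr]]]; apply: nimm; exists q; do 2!split=> //.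
  by move=> r dr qrp; apply: nr; exists r; split=> //; apply.
- apply: nn => -[pre nimm]; have [q [dq [qp hq]]] := preds p dp pre.
  apply: nimm; exists q; do 2!split=> //.
  by move=> [r [dr nqrp]]; apply: nqrp; apply: hq.
Qed.

Lemma fo_definable_a_plus (a : M) : fo_definable (a_plus a).
Proof.
apply: fo_definable_ext (fo_definable_and (fo_definable_has_chain 1)
  (fo_definable_and (fo_definable_and fo_definable_has_last fo_definable_has_preds)
                    (fo_definable_all_letters a))) => u wu.
have ne_chain : (exists n, odom u n) <-> has_chain u 1.
  by split=> -[p]; [exists p|move=> [dp _]; exists p].
split=> [[/ne_chain ne [fin lab]]|[_ [fin [ne lab]]]].
- by split=> //; split; [apply/(finite_domE wu ne)|split].
- by split; [apply/ne_chain|split=> //; apply/(finite_domE wu ne)].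
Qed.

Lemma fo_definable_has_size k : fo_definable (fun u => has_size u k).
Proof.
exact: fo_definable_and (fo_definable_has_chain k)
  (fo_definable_not (fo_definable_has_chain k.+1)).
Qed.

End FirstOrder.

Lemma iter_eventually_periodic (T : finType) (f : T -> T) x :
  exists i P, 0 < P /\ iter (i + P) f x = iter i f x.
Proof.
have /trajectP [i lt_i_ord per] := looping_order f x.
by exists i, (order f x - i); rewrite subn_gt0 lt_i_ord subnKC // ltnW.
Qed.

Lemma iter_fact_addn (T : finType) (f : T -> T) x : exists I, forall n, I <= n ->
  exists N, forall m, N <= m -> iter (m`! + n) f x = iter n f x.
Proof.
have [i [P [P_gt0 per]]] := iter_eventually_periodic f x.
exists i => n le_i_n; exists P => m le_P_m.
have iterP k : i <= k -> iter (P + k) f x = iter k f x.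
  by move=> le_i_k; rewrite -(subnK le_i_k) [P + _]addnC -addnA [LHS]iterD per -iterD.
have iter_mulP t : iter (t * P + n) f x = iter n f x.
  elim: t => [|t IH]; first by rewrite mul0n.
  by rewrite mulSn -addnA iterP ?IH // (leq_trans le_i_n) ?leq_addl.
have dvd_P_fact : P %| m`! by apply: dvdn_fact; rewrite P_gt0.
by rewrite -(divnK dvd_P_fact) iter_mulP.
Qed.

Section Powers.
Variables (M : Type) (pi : oword M -> M).
Hypothesis pim : is_ordinal_monoid pi.
Variable a : M.

Lemma om_pow1 : om_pow pi a 1 = a.
Proof.
have [_ [pi_single _]] := pim.
rewrite -[RHS]pi_single (pi_const_word pim (a := a) (k := 1) (wf_single_word a)) //.
by split=> [|[p [-> [q [_ []]]]]]; first by exists 0.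
Qed.

Lemma cl_sharp_pow (sharp : M -> M) k : 0 < k ->
  cl_sharp pi sharp (fun x => x = a) (om_pow pi a k).
Proof.
case: k => [//|k] _; elim: k => [|k IH]; first by rewrite om_pow1; apply: cl_base.
by apply: cl_mul IH; apply: cl_base.
Qed.

Lemma a_plus_pow u : a_plus a u -> exists2 k, 0 < k & has_size u k /\ pi u = om_pow pi a k.
Proof.
move=> [wu [[N bnd] [[n dn] lab]]].
have [k size_k] := has_size_exists (bounded_no_chain wu bnd).
exists k; last by split=> //; apply: pi_const_word.
by rewrite -(has_size_chainE 1 size_k); exists n.
Qed.

Definition cut_pi (s : M) (I : nat) (u : oword M) : M :=
  if excluded_middle_informative (has_chain u I) then s else pi u.

Lemma fo_definable_cut_pi s I : fo_definable_map (a_plus a) (cut_pi s I).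
Proof.
move=> m.
pose pow_fibre k (u : oword M) := has_size u k /\ om_pow pi a k = m.
have d_pow_fibre k : fo_definable (pow_fibre k).
  exact: fo_definable_and (fo_definable_has_size k) (fo_definable_const (om_pow pi a k = m)).
apply: fo_definable_ext (fo_definable_and (fo_definable_a_plus a) (fo_definable_or
  (fo_definable_and (fo_definable_has_chain I) (fo_definable_const (s = m)))
  (fo_definable_exists_lt I d_pow_fibre))) => u wu.
rewrite /cut_pi; case: excluded_middle_informative => cI /=.
- split=> [[au [[_ <-]|[k lt_k_I [size_k _]]]]|[au <-]]; [by []| |by split=> //; left].
  by have := proj1 (has_size_chainE I size_k) cI; rewrite leqNgt lt_k_I.
- split=> [[au [[/cI]|[k lt_k_I [size_k <-]]]]|[au pi_u_m]] //.
    by split=> //; case: au => _ [_ [_ lab]]; apply: pi_const_word.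
  have [k _ [size_k pi_u]] := a_plus_pow au.
  split=> //; right; exists k; last by rewrite /pow_fibre -pi_u.
  by rewrite ltnNge; apply/negP => /(has_size_chainE I size_k).
Qed.

End Powers.

Theorem lemma5p7 (M : finType) (pi : oword M -> M) (le : M -> M -> Prop)
    (sharp : M -> M) :
  is_ordinal_monoid_with_merge pi le sharp ->
  forall a : M, exists rho : oword M -> M,
    fo_approximant pi le (a_plus a) (cl_sharp pi sharp (fun x => x = a)) rho.
Proof.
move=> [[pim [[le_refl _] _]] [_ [pow_le_sharp _]]] a.
have [I periodic] := iter_fact_addn (om_mul pi a) (om_one pi a).
exists (cut_pi pi (sharp a) I); split; first exact: fo_definable_cut_pi.
split=> u au; have [k k_gt0 [size_k pi_u]] := a_plus_pow pim au;
  rewrite /cut_pi; case: excluded_middle_informative => cI.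
- by rewrite pi_u; apply: (pow_le_sharp a k); apply/periodic/(has_size_chainE I size_k).
- by rewrite pi_u; apply: le_refl.
- by apply: cl_sharp_op; apply: cl_base.
- by rewrite pi_u; apply: cl_sharp_pow.
Qed.
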